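(* Let $\Gamma$ be a set and $\Lambda:\Gamma\to\mathbb R^{m\times m}$ with sparsity pattern $S$. Let $L\in\mathbb R^{m\times m}$ be invertible and let $\hat S$ be the sparsity pattern of $\hat\Lambda(\cdot):=L^\top\Lambda(\cdot)L$. Let $\sigma$ be a permutation of $\{1,\dots,m\}$ with $L_{i,\sigma(i)}\neq0$ for all $i$ (such a $\sigma$ exists since $L$ is invertible) and $P$ its permutation matrix, $Pe_i=e_{\sigma(i)}$. Assume $\operatorname{span}(\Lambda(\Gamma))=\mathbb R^{m\times m}_S$. Then $S\subset P^\top\hat SP$ (as sets of nonzero entries). If moreover $\|\hat S\|_0\le\|S\|_0$, then $S=P^\top\hat SP$ and $L=CP^\top$ for some matrix $C$ that is both $S$-consistent and $S^\top$-consistent.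
   Context: Sparsity pattern: for $\Lambda:\Gamma\to\mathbb R^{m\times n}$, its sparsity pattern is the binary matrix $S$ with $S_{i,j}=1$ iff there exists $\gamma\in\Gamma$ with $\Lambda_{i,j}(\gamma)\neq0$. $\mathbb R^{m\times n}_B=\{M\in\mathbb R^{m\times n}: B_{ij}=0\Rightarrow M_{ij}=0\}$. $\|\cdot\|_0$ counts nonzero entries. $S$-consistency: for $S\in\{0,1\}^{m\times n}$, $C\in\mathbb R^{m\times m}$ is $S$-consistent iff for all $i,j$: $[\mathbb 1-S(\mathbb 1-S)^\top]^+_{i,j}=0\Rightarrow C_{i,j}=0$, with $[\cdot]^+=\max\{0,\cdot\}$ entrywise and $\mathbb 1$ an all-ones matrix of appropriate size. *)

From HB Require Import structures.
From mathcomp Require Import all_boot all_order all_algebra all_fingroup.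
Set Implicit Arguments. Unset Strict Implicit. Unset Printing Implicit Defensive.
Import Order.TTheory GRing.Theory Num.Theory.
Local Open Scope ring_scope.

Definition is_sparsity_pattern (R : ringType) (Gamma : Type) (m n : nat)
  (Lam : Gamma -> 'M[R]_(m, n)) (S : 'M[bool]_(m, n)) : Prop :=
  forall i j, S i j = true <-> exists g : Gamma, Lam g i j != 0.

Definition bmx (R : ringType) (m n : nat) (S : 'M[bool]_(m, n)) : 'M[R]_(m, n) :=
  map_mx (fun b : bool => (b : nat)%:R) S.

Definition in_span (R : ringType) (Gamma : Type) (m n : nat)
  (Lam : Gamma -> 'M[R]_(m, n)) (M : 'M[R]_(m, n)) : Prop :=
  exists (k : nat) (g : 'I_k -> Gamma) (c : 'I_k -> R),
    M = \sum_(l < k) c l *: Lam (g l).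

Definition span_eq_patterned (R : ringType) (Gamma : Type) (m n : nat)
  (Lam : Gamma -> 'M[R]_(m, n)) (S : 'M[bool]_(m, n)) : Prop :=
  forall M : 'M[R]_(m, n),
    in_span Lam M <-> (forall i j, S i j = false -> M i j = 0).

Definition mx_norm0 (R : ringType) (m n : nat) (M : 'M[R]_(m, n)) : nat :=
  #|[set p : 'I_m * 'I_n | M p.1 p.2 != 0]|.

Definition ones_mx (R : ringType) (m n : nat) : 'M[R]_(m, n) := const_mx 1.

Definition consistent (R : realDomainType) (m n : nat) (S : 'M[bool]_(m, n))
  (C : 'M[R]_m) : Prop :=
  forall i j : 'I_m,
    Num.max 0 ((ones_mx R m m - bmx R S *m (ones_mx R m n - bmx R S)^T) i j) = 0 ->
    C i j = 0.

(* Permutation matrix P of sigma with P e_i = e_{sigma i}, i.e. P_{k,i} = [k = sigma i]. *)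
Definition pmx (R : ringType) (m : nat) (s : 'S_m) : 'M[R]_m :=
  \matrix_(k < m, i < m) ((k == s i) : nat)%:R.

(* Every elementary matrix E_ab with S_ab = 1 lies in span(Lam(Gamma)), so
   L^T E_ab L, whose (x, y) entry is L_ax L_by, is a combination of the
   L^T Lam(g) L; hence Shat_xy = 1 whenever L_ax and L_by are nonzero.
   Taking x = sigma a, y = sigma b gives S <= P^T Shat P.  If Shat has no
   more nonzero entries than S, the injection (a, b) |-> (sigma a, sigma b)
   between the supports is a bijection, so S = P^T Shat P.  For C := L P,
   C_ij = L_{i, sigma j} != 0 then forces S_ik -> S_jk and S_ki -> S_kj,
   which makes the corresponding entries of the consistency matrices 1. *)

From HB Require Import structures.
From mathcomp Require Import all_boot all_order all_algebra all_fingroup.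
Set Implicit Arguments. Unset Strict Implicit. Unset Printing Implicit Defensive.
Import Order.TTheory GRing.Theory Num.Theory.
Local Open Scope ring_scope.

Lemma bmxE (R : nzRingType) m n (S : 'M[bool]_(m, n)) i j :
  (bmx R S i j != 0) = S i j.
Proof. by rewrite mxE; case: (S i j); rewrite ?oner_eq0 ?eqxx. Qed.

Lemma mx_norm0_bmx (R : nzRingType) m n (S : 'M[bool]_(m, n)) :
  mx_norm0 (bmx R S) = #|[set p : 'I_m * 'I_n | S p.1 p.2]|.
Proof. by apply: eq_card => p; rewrite !inE bmxE. Qed.

Section PermutationMatrix.

Variables (R : nzRingType) (m : nat) (s : 'S_m).

Lemma pmx_perm_mx : pmx R s = perm_mx s^-1.
Proof. by apply/matrixP => k i; rewrite !mxE (canF_eq (permKV s)). Qed.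

Lemma tr_pmx : (pmx R s)^T = perm_mx s.
Proof. by rewrite pmx_perm_mx tr_perm_mx invgK. Qed.

Lemma mulmx_tr_pmx : pmx R s *m (pmx R s)^T = 1%:M.
Proof. by rewrite tr_pmx pmx_perm_mx -perm_mxM mulVg perm_mx1. Qed.

Lemma pmx_conjE (A : 'M[R]_m) i j :
  ((pmx R s)^T *m A *m pmx R s) i j = A (s i) (s j).
Proof. by rewrite tr_pmx pmx_perm_mx -row_permE -col_permE !mxE. Qed.

Lemma mulmx_pmxE (A : 'M[R]_m) i j : (A *m pmx R s) i j = A i (s j).
Proof. by rewrite pmx_perm_mx -col_permE mxE. Qed.

End PermutationMatrix.

Lemma congr_delta_mxE (R : nzRingType) m n (L : 'M[R]_(m, n)) a b x y :
  (L^T *m delta_mx a b *m L) x y = L a x * L b y.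
Proof.
rewrite mxE (bigD1 b) //= big1 ?addr0 => [|k /negbTE nkb].
  by rewrite mxE (bigD1 a) //= big1 ?addr0 => [|l /negbTE nla];
    rewrite !mxE ?eqxx ?nla ?mulr1 ?mulr0.
by rewrite !mxE big1 ?mul0r // => l _; rewrite !mxE nkb andbF mulr0.
Qed.

Section SparsityTransfer.

Variables (R : comNzRingType) (Gamma : Type) (m n : nat).
Variables (Lam : Gamma -> 'M[R]_(m, m)) (L : 'M[R]_(m, n)).
Variables (S : 'M[bool]_m) (Shat : 'M[bool]_n).

Lemma delta_mx_in_span a b :
  span_eq_patterned Lam S -> S a b -> in_span Lam (delta_mx a b).
Proof.
move=> spanS Sab; apply/spanS => i j Sij; rewrite mxE.
by case: eqP => [ei|] //; case: eqP => [ej|] //; move: Sij; rewrite ei ej Sab.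
Qed.

Lemma in_span_congr_pattern M x y :
  is_sparsity_pattern (fun g => L^T *m Lam g *m L) Shat ->
  in_span Lam M -> Shat x y = false -> (L^T *m M *m L) x y = 0.
Proof.
move=> patShat [k [g [c ->]]] nShat.
rewrite mulmx_sumr mulmx_suml summxE big1 // => l _.
have entry0 : (L^T *m Lam (g l) *m L) x y = 0.
  by apply/eqP; apply: contraFT nShat => nz; apply/patShat; exists (g l).
by rewrite -scalemxAr -scalemxAl mxE entry0 mulr0.
Qed.

End SparsityTransfer.

Lemma congr_pattern_support (R : idomainType) (Gamma : Type) (m n : nat)
    (Lam : Gamma -> 'M[R]_(m, m)) (L : 'M[R]_(m, n))
    (S : 'M[bool]_m) (Shat : 'M[bool]_n) a b x y :
  span_eq_patterned Lam S ->
  is_sparsity_pattern (fun g => L^T *m Lam g *m L) Shat ->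
  S a b -> L a x != 0 -> L b y != 0 -> Shat x y.
Proof.
move=> spanS patShat Sab Lax Lby; apply: contraTT (mulf_neq0 Lax Lby) => nShat.
rewrite -congr_delta_mxE (in_span_congr_pattern patShat) ?eqxx //.
  exact: delta_mx_in_span.
exact: negbTE.
Qed.

Lemma perm_subpattern_eq m (s : 'S_m) (S T : 'M[bool]_m) :
  (forall i j, S i j -> T (s i) (s j)) ->
  (#|[set p : 'I_m * 'I_m | T p.1 p.2]| <= #|[set p | S p.1 p.2]|)%N ->
  forall i j, S i j = T (s i) (s j).
Proof.
move=> subST leTS.
pose f (p : 'I_m * 'I_m) := (s p.1, s p.2).
have f_inj : injective f by move=> [? ?] [? ?] [/perm_inj -> /perm_inj ->].
have imST : f @: [set p | S p.1 p.2] = [set p | T p.1 p.2].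
  apply/eqP; rewrite eqEcard card_imset // leTS andbT.
  by apply/subsetP => _ /imsetP [p Sp ->]; move: Sp; rewrite !inE => /subST.
move=> i j; apply/idP/idP => [/subST //|Tij].
have : f (i, j) \in f @: [set p | S p.1 p.2] by rewrite imST inE.
by rewrite mem_imset // inE.
Qed.

Lemma consistent_row_sub (R : realDomainType) m n (T : 'M[bool]_(m, n))
    (C : 'M[R]_m) :
  (forall i j, C i j != 0 -> forall k, T i k -> T j k) -> consistent T C.
Proof.
move=> subT i j; apply: contra_eq => /subT subij.
have -> : (ones_mx R m m - bmx R T *m (ones_mx R m n - bmx R T)^T) i j = 1.
  rewrite !mxE big1 ?subr0 // => k _; rewrite !mxE.
  by case Tik: (T i k); rewrite ?mul0r // subij ?subrr ?mulr0.
by rewrite max_r ?ler01 ?oner_eq0.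
Qed.

Theorem mainTheorem3 (R : realFieldType) (Gamma : Type) (m : nat)
  (Lam : Gamma -> 'M[R]_m) (S : 'M[bool]_m) (L : 'M[R]_m) (Shat : 'M[bool]_m)
  (sigma : 'S_m) :
  is_sparsity_pattern Lam S ->
  L \in unitmx ->
  is_sparsity_pattern (fun g => L^T *m Lam g *m L) Shat ->
  (forall i : 'I_m, L i (sigma i) != 0) ->
  span_eq_patterned Lam S ->
  (forall i j, S i j = true ->
     ((pmx R sigma)^T *m bmx R Shat *m pmx R sigma) i j != 0)
  /\
  ((mx_norm0 (bmx R Shat) <= mx_norm0 (bmx R S))%N ->
     bmx R S = (pmx R sigma)^T *m bmx R Shat *m pmx R sigma /\
     exists C : 'M[R]_m,
       L = C *m (pmx R sigma)^T /\ consistent S C /\ consistent S^T C).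
Proof.
(* The span hypothesis already pins down S, and sigma replaces invertibility. *)
move=> _ _ patShat Lsigma spanS.
have transfer := congr_pattern_support spanS patShat.
have subS i j : S i j -> Shat (sigma i) (sigma j).
  by move=> Sij; apply: transfer Sij (Lsigma i) (Lsigma j).
split=> [i j Sij|]; first by rewrite pmx_conjE bmxE subS.
rewrite !mx_norm0_bmx => /(perm_subpattern_eq subS) eqS.
split; first by apply/matrixP => i j; rewrite pmx_conjE !mxE eqS.
exists (L *m pmx R sigma); split; first by rewrite -mulmxA mulmx_tr_pmx mulmx1.
split; apply: consistent_row_sub => i j; rewrite mulmx_pmxE => Lij k.
  by move=> Sik; rewrite eqS; apply: transfer Sik Lij (Lsigma k).
by rewrite !mxE => Ski; rewrite eqS; apply: transfer Ski (Lsigma k) Lij.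
Qed.
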